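(* $\mathfrak{F}'\subseteq\mathcal{P}$, i.e. every connected graph with the extended distinguished edge property has property GNRP.
   Context: Graphs are finite, simple and undirected. $\mathbb{T}=\{z\in\mathbb{C}:|z|=1\}$, $\mathbb{I}=[0,2\pi)$. A $\mathbb{T}$-gain on $G$ is a map $\varphi$ from oriented edges to $\mathbb{T}$ with $\varphi(\overrightarrow{e_{ts}})=\varphi(\overrightarrow{e_{st}})^{-1}$; $A(\Phi)$ for $\Phi=(G,\varphi)$ is the Hermitian matrix with $(s,t)$ entry $\varphi(\overrightarrow{e_{st}})$ if $v_s\sim v_t$, else $0$; $\mathcal{T}_G$ is the set of all $\mathbb{T}$-gain graphs on $G$. $\Re(A)\ge0$ means the real part of every entry of $A$ is nonnegative. The gain of a directed cycle is the product of gains of its oriented edges. A rooted spanning tree $T$ with root $v_r$ induces the tree order ($v_x\le v_y$ iff $v_x$ is on the $T$-path from $v_r$ to $v_y$); $T$ is normal if adjacent vertices of $G$ are always comparable. The suitably oriented graph $\overrightarrow{G_T}$ orients each edge $e_{st}$ with $v_s\le v_t$ as $\overrightarrow{e_{st}}$ if $e_{st}\in E(T)$ and as $\overrightarrow{e_{ts}}$ otherwise; the $m-n+1$ fundamental cycles $C_j$ of $T$ become directed cycles $\overrightarrow{C_j(T)}$. For $r=(c_1,\dots,c_{m-n+1})\in\mathbb{I}^{m-n+1}$, $\mathcal{A}_T(r)=\{(G,\varphi)\in\mathcal{T}_G:\varphi(\overrightarrow{C_j(T)})=e^{ic_j}\ \forall j\}$. $G$ has GNRP (w.r.t. normal spanning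 tree $T$) if for each $r$ there is $\Phi\in\mathcal{A}_T(r)$ with $\Re(A(\Phi))\ge0$; $\mathcal{P}$ is the class of connected graphs with GNRP. The sum of subgraphs is the subgraph consisting of all edges in at least one of them. A fundamental subgraph of $G$ w.r.t. $T$ is the sum of a maximal collection of fundamental cycles whose sum intersects $T$ in a subtree. $K_4'$ denotes either $K_4$ or a subdivision of $K_4$ (a graph obtained from $K_4$ by repeatedly replacing an edge by a path of length two through a new vertex). A fundamental subgraph $\mathfrak{B}$ whose set $S$ of fundamental cycles contains three cycles $C_1',C_2',C_3'$ with $C_1'+C_2'+C_3'$ equal to a $K_4'$ is called $K_4'$-initiated; it equals $K_4'+C_1+\cdots+C_s$ where $C_1,\dots,C_s$ are the other cycles of $S$, and it has DEP if the $C_i$ can be ordered $C_{k_1},\dots,C_{k_s}$ so that $|E(C_{k_i})\setminus E(C_{k_0}+C_{k_1}+\cdots+C_{k_{i-1}})|>1$ for $i=1,\dots,s$, where $C_{k_0}=K_4'$. A non-$K_4'$-initiated fundamental subgraph built from cycles $C_1,\dots,C_s$ has DEP if they can be ordered $C_{k_1},\dots,C_{k_s}$ with $|E(C_{k_i})\setminus E(C_{k_1}+\cdots+C_{k_{i-1}})|>1$ for $i=2,\dots,s$. A connected graph has the extended distinguished edge property (EDEP) if all its $K_4'$-initiated and non-$K_4'$-initiated fundamental subgraphs with respect to a normal spanning tree $T$ have DEP (in the respective sense). $\mathfrak{F}'$ is the collection of connected graphs with EDEP. *)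

From mathcomp Require Import all_boot all_order all_algebra.
From mathcomp Require Import reals trigo.
From mathcomp Require Export complex.
Set Implicit Arguments. Unset Strict Implicit. Unset Printing Implicit Defensive.
Import Order.TTheory GRing.Theory Num.Theory.

(* An edge {u,v} is represented as the 2-element set [set u; v].       *)
Section Graphs.
Variables (T : finType) (e : rel T).

Definition simple_graph : Prop := symmetric e /\ irreflexive e.

Definition connected_graph : Prop := forall x y : T, connect e x y.

Definition rooted_spanning_tree (r : T) (par : T -> T) : Prop :=
  [/\ par r = r,
      (forall x, x != r -> e x (par x)) &
      (forall x, fconnect par x r)].

(* tree order: x <=_T y iff x lies on the T-path from the root to y,
   i.e. x is an ancestor of y (y itself included). *)
Definition tle (par : T -> T) (x y : T) : bool := fconnect par y x.

Definition normal_tree (par : T -> T) : Prop :=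
  forall x y, e x y -> tle par x y || tle par y x.

Definition tree_edge (r : T) (par : T -> T) (x y : T) : bool :=
  ((x != r) && (par x == y)) || ((y != r) && (par y == x)).

Definition tree_edges (r : T) (par : T -> T) : {set {set T}} :=
  [set [set x; par x] | x in [set x | x != r]].

(* Non-tree edges {s,t} with s <=_T t, written as the pair (s,t); each one
   determines the fundamental cycle C(s,t). *)
Definition back_edges (r : T) (par : T -> T) : {set T * T} :=
  [set p | [&& e p.1 p.2, tle par p.1 p.2 & ~~ tree_edge r par p.1 p.2]].

(* vertices u with s <_T u <=_T t : the tree path from s to t consists of
   the tree edges {par u, u} for these u *)
Definition tpath (par : T -> T) (s t : T) : {set T} :=
  [set u | [&& tle par s u, u != s & tle par u t]].

Definition cyc_edges (par : T -> T) (p : T * T) : {set {set T}} :=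
  [set [set u; par u] | u in tpath par p.1 p.2] :|: [set [set p.1; p.2]].

(* sum of the fundamental cycles indexed by S (union of edge sets) *)
Definition sum_edges (par : T -> T) (S : {set T * T}) : {set {set T}} :=
  \bigcup_(p in S) cyc_edges par p.

Definition vertices (F : {set {set T}}) : {set T} := \bigcup_(E in F) E.

Definition edge_rel (F : {set {set T}}) : rel T := fun a b => [set a; b] \in F.

Definition edge_connected (F : {set {set T}}) : Prop :=
  forall x y, x \in vertices F -> y \in vertices F -> connect (edge_rel F) x y.

Definition meets_in_subtree (r : T) (par : T -> T) (S : {set T * T}) : Prop :=
  edge_connected (sum_edges par S :&: tree_edges r par).

(* S is (the set of cycles of) a fundamental subgraph: a maximal
   collection of fundamental cycles whose sum meets T in a subtree *)
Definition fundamental_set (r : T) (par : T -> T) (S : {set T * T}) : Prop :=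
  [/\ S \subset back_edges r par,
      meets_in_subtree r par S &
      forall S' : {set T * T}, S \subset S' -> S' \subset back_edges r par ->
        meets_in_subtree r par S' -> S' = S].

Inductive subdivK4 : {set {set T}} -> Prop :=
| subdivK4_base (a b c d : T) : uniq [:: a; b; c; d] ->
    subdivK4 [set [set a; b]; [set a; c]; [set a; d];
                  [set b; c]; [set b; d]; [set c; d]]
| subdivK4_step (F : {set {set T}}) (x y w : T) :
    subdivK4 F -> [set x; y] \in F -> w \notin vertices F ->
    subdivK4 ((F :\ [set x; y]) :|: [set [set x; w]; [set w; y]]).

Fixpoint dep_from (par : T -> T) (B : {set {set T}}) (ks : seq (T * T)) : bool :=
  if ks is k :: ks' then
    (1 < #|cyc_edges par k :\: B|) && dep_from par (B :|: cyc_edges par k) ks'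
  else true.

Definition K4_initiated (par : T -> T) (S : {set T * T}) : Prop :=
  exists p1 p2 p3 : T * T,
    [/\ uniq [:: p1; p2; p3], [set p1; p2; p3] \subset S &
        subdivK4 (cyc_edges par p1 :|: cyc_edges par p2 :|: cyc_edges par p3)].

Definition DEP_K4 (par : T -> T) (S : {set T * T}) : Prop :=
  exists (p1 p2 p3 : T * T) (ks : seq (T * T)),
    let K := cyc_edges par p1 :|: cyc_edges par p2 :|: cyc_edges par p3 in
    [/\ uniq [:: p1; p2; p3], [set p1; p2; p3] \subset S, subdivK4 K,
        perm_eq ks (enum (S :\: [set p1; p2; p3])) & dep_from par K ks].

Definition DEP_nonK4 (par : T -> T) (S : {set T * T}) : Prop :=
  exists ks : seq (T * T),
    perm_eq ks (enum S) /\
    (if ks is k :: ks' then dep_from par (cyc_edges par k) ks' else true).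

Definition EDEP (r : T) (par : T -> T) : Prop :=
  forall S : {set T * T}, fundamental_set r par S ->
    (K4_initiated par S -> DEP_K4 par S) /\
    (~ K4_initiated par S -> DEP_nonK4 par S).

End Graphs.

Section Gains.
Local Open Scope ring_scope.
Local Open Scope complex_scope.
Variables (R : realType) (T : finType) (e : rel T).

(* phi x y = gain of the oriented edge from x to y *)
Definition gain_graph (phi : T -> T -> R[i]) : Prop :=
  forall x y, e x y -> `|phi x y| = 1 /\ phi y x = (phi x y)^-1.

Definition gain_adj (phi : T -> T -> R[i]) (x y : T) : R[i] :=
  if e x y then phi x y else 0.

(* gain of the directed fundamental cycle of the non-tree edge p = (s,t),
   s <=_T t, in the suitably oriented graph: tree edges oriented
   par u -> u, the non-tree edge oriented t -> s *)
Definition cycle_gain (par : T -> T) (phi : T -> T -> R[i]) (p : T * T) : R[i] :=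
  phi p.2 p.1 * \prod_(u in tpath par p.1 p.2) phi (par u) u.

Definition cexpi (c : R) : R[i] := cos c +i* sin c.

Definition in_AT (r : T) (par : T -> T) (c : T * T -> R) (phi : T -> T -> R[i]) : Prop :=
  gain_graph phi /\
  forall p, p \in back_edges e r par -> cycle_gain par phi p = cexpi (c p).

Definition GNRP (r : T) (par : T -> T) : Prop :=
  forall c : T * T -> R,
    (forall p, p \in back_edges e r par -> 0 <= c p < 2 * pi) ->
    exists phi : T -> T -> R[i],
      in_AT r par c phi /\ forall x y, 0 <= 'Re (gain_adj phi x y).

End Gains.

From mathcomp Require Import all_boot all_order all_algebra.
From mathcomp Require Import boolp reals trigo.
From mathcomp Require Import ring lra.

(** Give every edge an angle in [-pi/2, pi/2] and let the gain of an edge, oriented as in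
    the suitably oriented graph, be e^(i angle); then every entry of A(Phi) has nonnegative
    real part and the gain of a fundamental cycle is e^(i sum of its angles).  It remains
    to choose the angles so that each cycle sum is c_j mod 2pi.  Distinct fundamental
    subgraphs are edge-disjoint, so they can be treated one at a time.  A cycle with two
    edges not used by the cycles already treated can be fitted without disturbing them,
    because two angles in [-pi/2, pi/2] add up to any angle mod 2pi; DEP provides such an
    order.  The three cycles initiating a K4' are fitted together: either one of them has
    two private edges, or they are interlaced along a root path and the three resulting
    angle equations are solved explicitly. *)

Set Implicit Arguments. Unset Strict Implicit. Unset Printing Implicit Defensive.
Import Order.TTheory GRing.Theory Num.Theory.

(** * Angle arithmetic *)

Section Angles.
Local Open Scope ring_scope.
Variable R : realType.
Implicit Types a b d x y z A B C L : R.

Definition halfpi x := - (pi / 2) <= x <= pi / 2.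

Lemma halfpiN x : halfpi x -> halfpi (- x).
Proof. by rewrite /halfpi => /andP[h1 h2]; rewrite lerN2 h2 /= lerNl. Qed.

Lemma cexpiD a b : cexpi (a + b) = cexpi a * cexpi b.
Proof.
rewrite /cexpi /= cosD sinD; apply/eqP.
by rewrite eq_complex /= !eqxx /= addrC eqxx.
Qed.

Lemma cexpi0 : cexpi (0 : R) = 1.
Proof. by rewrite /cexpi cos0 sin0. Qed.

Lemma cexpiN a : cexpi (- a) = (cexpi a)^-1.
Proof.
have inv : cexpi a * cexpi (- a) = 1 by rewrite -cexpiD subrr cexpi0.
have nz : cexpi a != 0.
  by apply: contra_eqN inv => /eqP ->; rewrite mul0r eq_sym oner_eq0.
by rewrite -[cexpi (- a)]mul1r -(mulVf nz) -mulrA inv mulr1.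
Qed.

Lemma norm_cexpi a : `|cexpi a| = 1.
Proof. by rewrite normc_def /cexpi /= cos2Dsin2 sqrtr1. Qed.

Lemma Re_cexpi_ge0 a : halfpi a -> 0 <= 'Re (cexpi a).
Proof. by move=> h; rewrite -complexRe ler0c; apply: cos_ge0_pihalf. Qed.

Lemma cexpiDn a n : cexpi (a + pi *+ 2 *+ n) = cexpi a.
Proof. by rewrite /cexpi (periodicn (@cosD2pi R)) (periodicn (@sinD2pi R)). Qed.

Lemma cexpi_mod2pi L a : exists2 b, L <= b <= L + pi *+ 2 & cexpi b = cexpi a.
Proof.
have tau_gt0 : 0 < pi *+ 2 :> R by rewrite mulrn_wgt0 // pi_gt0.
set k := Num.floor ((a - L) / (pi *+ 2)).
have kE : (a - L) / (pi *+ 2) * (pi *+ 2) = a - L by rewrite divfK // gt_eqF.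
have lo : k%:~R * (pi *+ 2) <= a - L.
  by rewrite -[leRHS]kE ler_pM2r // floor_le.
have hi : a - L < (k%:~R + 1) * (pi *+ 2).
  by rewrite -[ltLHS]kE ltr_pM2r //; have := floorD1_gt ((a - L) / (pi *+ 2)); rewrite intrD.
exists (a - (pi *+ 2) *~ k).
  by rewrite -mulrzl; apply/andP; split; lra.
case: k {lo hi} => n; first by rewrite -[in RHS](subrK (pi *+ 2 *+ n) a) cexpiDn.
by rewrite NegzE mulrNz opprK cexpiDn.
Qed.

Lemma cexpi_halfpi2 a : exists x y, [/\ halfpi x, halfpi y & cexpi (x + y) = cexpi a].
Proof.
have [b /andP[b1 b2] <-] := cexpi_mod2pi (- pi) a.
have := pi_gt0 R => pi_gt0.
by exists (b / 2), (b / 2); rewrite -splitr; split => //; apply/andP; split; lra.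
Qed.

Lemma halfpi_window d : `|d| <= pi -> exists lo hi,
  [/\ - (pi / 2) <= lo, hi <= pi / 2, pi - `|d| <= hi - lo &
      forall x, lo <= x <= hi -> halfpi (d - x)].
Proof.
have := pi_gt0 R => pi_gt0.
have [d0|d0] := lerP 0 d; [rewrite (ger0_norm d0) | rewrite (ltr0_norm d0)] => dpi.
  by exists (d - pi / 2), (pi / 2); split; try lra; move=> x /andP[? ?]; apply/andP; split; lra.
by exists (- (pi / 2)), (d + pi / 2); split; try lra; move=> x /andP[? ?]; apply/andP; split; lra.
Qed.

Lemma interval_sum_split (lo1 hi1 lo2 hi2 : R) x :
  lo1 <= hi1 -> lo2 <= hi2 -> lo1 + lo2 <= x <= hi1 + hi2 ->
  exists y z, [/\ lo1 <= y <= hi1, lo2 <= z <= hi2 & y + z = x].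
Proof.
move=> h1 h2 /andP[x1 x2].
have [h|h] := lerP hi1 (x - lo2).
  by exists hi1, (x - hi1); split; try (apply/andP; split); lra.
by exists (x - lo2), lo2; split; try (apply/andP; split); lra.
Qed.

(* The windows of admissible al and ga have total length at least pi, so al + ga sweeps an
   interval of length pi, which p3 in [-pi/2, pi/2] completes to a full turn. *)
Lemma halfpi_pair_core d1 d2 B : `|d1| + `|d2| <= pi ->
  exists al ga p1 p2 p3, [/\ [/\ halfpi al, halfpi ga, halfpi p1, halfpi p2 & halfpi p3],
    al + p1 = d1, ga + p2 = d2 & cexpi (al + ga + p3) = cexpi B].
Proof.
move=> hd; have := pi_gt0 R => pi_gt0.
have [lo1 [hi1 [l1 u1 w1 h1]]] := halfpi_window (d := d1) ltac:(have := normr_ge0 d2; lra).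
have [lo2 [hi2 [l2 u2 w2 h2]]] := halfpi_window (d := d2) ltac:(have := normr_ge0 d1; lra).
have [v /andP[v1 v2] <-] := cexpi_mod2pi (lo1 + lo2 - pi / 2) B.
have [x [p3 [/andP[x1 x2] hp3 ->]]] : exists x p3,
    [/\ lo1 + lo2 <= x <= lo1 + lo2 + pi, halfpi p3 & v = x + p3].
  have [h|h] := lerP (v - pi / 2) (lo1 + lo2).
    by exists (lo1 + lo2), (v - (lo1 + lo2)); split; try (apply/andP; split); lra.
  by exists (v - pi / 2), (pi / 2); split; try (apply/andP; split); lra.
have [al [ga [ha hg <-]]] : exists al ga, [/\ lo1 <= al <= hi1, lo2 <= ga <= hi2 & al + ga = x].
  have := normr_ge0 d1; have := normr_ge0 d2 => n1 n2.
  by apply: interval_sum_split; try (apply/andP; split); lra.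
move: ha hg => /andP[ha1 ha2] /andP[hg1 hg2].
exists al, ga, (d1 - al), (d2 - ga), p3; split; [|ring|ring|by []].
split=> //; [apply/andP; split; lra | apply/andP; split; lra | |].
  by apply: h1; rewrite ha1.
by apply: h2; rewrite hg1.
Qed.

Lemma cexpiD_eq a b x : cexpi a = cexpi b -> cexpi (a + x) = cexpi (b + x).
Proof. by rewrite !cexpiD => ->. Qed.

Lemma cexpi_congr x x' y y' : x = x' -> y = y' -> cexpi x' = cexpi y' -> cexpi x = cexpi y.
Proof. by move=> -> ->. Qed.

Lemma norm_add_le x y z : x + y <= z -> x - y <= z -> y - x <= z -> - x - y <= z ->
  `|x| + `|y| <= z.
Proof.
move=> h1 h2 h3 h4.
have [x0|x0] := lerP 0 x; [rewrite (ger0_norm x0) | rewrite (ltr0_norm x0)];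
  (have [y0|y0] := lerP 0 y; [rewrite (ger0_norm y0) | rewrite (ltr0_norm y0)]) => //; lra.
Qed.

Lemma cexpi_center A C : exists t1 t2 be,
  [/\ halfpi be, cexpi t1 = cexpi A, cexpi t2 = cexpi C & `|t1 - be| + `|t2 - be| <= pi].
Proof.
have := pi_gt0 R => pi_gt0.
have [a /andP[a1 a2] <-] := cexpi_mod2pi (- pi) A.
have [c /andP[c1 c2] <-] := cexpi_mod2pi (- pi) C.
have cexpiB2pi x : cexpi (x - pi *+ 2) = cexpi x.
  by rewrite -[in RHS](subrK (pi *+ 2) x) -[pi *+ 2]mulr1n cexpiDn.
have cexpiD2pi x : cexpi (x + pi *+ 2) = cexpi x by rewrite -[pi *+ 2]mulr1n cexpiDn.
have halfpi_hi : halfpi (pi / 2) by apply/andP; split; lra.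
have halfpi_lo : halfpi (- (pi / 2)) by apply/andP; split; lra.
have [ac|ac] := lerP `|a - c| pi; move: ac.
- rewrite ler_norml => /andP[ac1 ac2].
  have [m1|m1] := lerP ((a + c) / 2) (- (pi / 2)).
    by exists a, c, (- (pi / 2)); split => //; apply: norm_add_le; lra.
  have [m2|m2] := lerP (pi / 2) ((a + c) / 2).
    by exists a, c, (pi / 2); split => //; apply: norm_add_le; lra.
  exists a, c, ((a + c) / 2); split => //; last by apply: norm_add_le; lra.
  by apply/andP; split; lra.
- have [s|s] := lerP (a + c) 0; have [d|d] := lerP 0 (a - c);
    rewrite ?(ger0_norm d) ?(ltr0_norm d) => ac.
  + by exists a, (c + pi *+ 2), (pi / 2); split; rewrite ?cexpiD2pi //; apply: norm_add_le; lra.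
  + by exists (a + pi *+ 2), c, (pi / 2); split; rewrite ?cexpiD2pi //; apply: norm_add_le; lra.
  + by exists (a - pi *+ 2), c, (- (pi / 2)); split; rewrite ?cexpiB2pi //; apply: norm_add_le; lra.
  + by exists a, (c - pi *+ 2), (- (pi / 2)); split; rewrite ?cexpiB2pi //; apply: norm_add_le; lra.
Qed.

(* The angle equations of three interlaced fundamental cycles: al, be, ga are carried by
   tree edges and p1, p2, p3 by the back edges; [k] tells whether the third cycle also
   passes through the edge of be, which is the case for a subdivided K4. *)
Lemma halfpi_triple_system (k : bool) A B C : exists al be ga p1 p2 p3,
  [/\ [/\ halfpi al, halfpi be & halfpi ga], [/\ halfpi p1, halfpi p2 & halfpi p3],
      cexpi (al + be + p1) = cexpi A, cexpi (be *+ k + ga + p2) = cexpi C &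
      cexpi (al + be + ga + p3) = cexpi B].
Proof.
case: k.
  have [t1 [t2 [be [hbe e1 e2 hd]]]] := cexpi_center A C.
  have [al [ga [p1 [p2 [p3 [[ha hg h1 h2 h3] s1 s2 e3]]]]]] := halfpi_pair_core (B - be) hd.
  exists al, be, ga, p1, p2, p3; split => //.
  - by rewrite -e1; congr cexpi; lra.
  - by rewrite mulr1n -e2; congr cexpi; lra.
  - rewrite (_ : al + be + ga + p3 = be + (al + ga + p3)); last by ring.
    by rewrite cexpiD e3 -cexpiD; congr cexpi; ring.
have [ga [p2 [hg h2 e2]]] := cexpi_halfpi2 C.
have [p3 [y [h3 hy e3]]] := cexpi_halfpi2 (B - A - ga).
have [al [be [ha hb e1]]] := cexpi_halfpi2 (A + y).
exists al, be, ga, (- y), p2, p3; split => //; first by split => //; apply: halfpiN.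
- by rewrite (cexpiD_eq _ e1); congr cexpi; ring.
- by rewrite /= mulr0n add0r.
- rewrite -addrA (cexpiD_eq _ e1).
  rewrite (_ : A + y + (ga + p3) = (p3 + y) + (A + ga)); last by ring.
  by rewrite cexpiD e3 -cexpiD; congr cexpi; ring.
Qed.

End Angles.

Section Reassign.
Local Open Scope ring_scope.
Variables (K : finType) (V : zmodType).
Implicit Types (f : K -> V) (l : seq (K * V)).

(* Overrides f at the keys of l (when they are distinct); written additively so that sums of
   the reassigned values split along l. *)
Definition reassign f l x : V :=
  f x + \sum_(kv <- l) (if x == kv.1 then kv.2 - f kv.1 else 0).

Lemma reassign_sum f l (Z : {set K}) :
  \sum_(x in Z) reassign f l x =
  \sum_(x in Z) f x + \sum_(kv <- l | kv.1 \in Z) (kv.2 - f kv.1).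
Proof.
rewrite big_split /=; congr (_ + _); rewrite [RHS]big_mkcond /=.
rewrite exchange_big /=; apply: eq_bigr => kv _.
case: ifP => kvZ; last by apply: big1 => x xZ; case: eqP => // xkv; rewrite -xkv xZ in kvZ.
by rewrite (bigD1 kv.1) //= eqxx big1 ?addr0 // => x /andP[_ /negbTE ->].
Qed.

Lemma reassign_out f l x : x \notin map fst l -> reassign f l x = f x.
Proof.
move=> xl; rewrite /reassign big1_seq ?addr0 // => kv /andP[_ kvl].
by case: eqP => // xE; rewrite xE map_f in xl.
Qed.

Lemma reassign_in f l x v : uniq (map fst l) -> (x, v) \in l -> reassign f l x = v.
Proof.
move=> ul xvl; rewrite /reassign.
suff -> : \sum_(kv <- l) (if x == kv.1 then kv.2 - f kv.1 else 0) = v - f x.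
  by rewrite addrC subrK.
elim: l ul xvl => [|[y w] l IHl] //= /andP[yl ul]; rewrite in_cons big_cons /=.
case/orP => [/eqP[-> ->]|xvl].
  rewrite eqxx big1_seq ?addr0 // => kv /andP[_ kvl].
  by case: eqP => // ykv; rewrite ykv map_f in yl.
rewrite IHl //; case: eqP => [xy|_]; last by rewrite add0r.
by rewrite -xy (map_f fst xvl) in yl.
Qed.

End Reassign.

Lemma set2_eq (T : finType) (a b c d : T) : [set a; b] = [set c; d] ->
  (a = c /\ b = d) \/ (a = d /\ b = c).
Proof.
move=> E.
have ha : a \in [set c; d] by rewrite -E set21.
have hb : b \in [set c; d] by rewrite -E set22.
have hc : c \in [set a; b] by rewrite E set21.
have hd : d \in [set a; b] by rewrite E set22.
move: ha hb hc hd; rewrite !inE => /orP[] /eqP ha /orP[] /eqP hb /orP[] /eqP hc /orP[] /eqP hd;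
  subst; intuition congruence.
Qed.

Lemma le3_eq (X : Type) (le : rel X) :
  antisymmetric le -> transitive le -> forall x1 x2 x3,
  le x1 x2 || le x1 x3 -> le x2 x1 || le x2 x3 -> le x3 x1 || le x3 x2 ->
  [\/ x1 = x2, x1 = x3 | x2 = x3].
Proof.
move=> anti tr x1 x2 x3 /orP[h1|h1] /orP[h2|h2] /orP[h3|h3];
  by [ constructor 1; apply: anti; rewrite ?h1 ?h2 ?(tr _ _ _ h3 h1) ?(tr _ _ _ h1 h2)
     | constructor 2; apply: anti; rewrite ?h1 ?h3 ?(tr _ _ _ h1 h2) ?(tr _ _ _ h3 h2)
     | constructor 3; apply: anti; rewrite ?h2 ?h3 ?(tr _ _ _ h3 h1) ?(tr _ _ _ h2 h1) ].
Qed.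

Lemma uniq3 (X : eqType) (a b c : X) : uniq [:: a; b; c] = [&& a != b, a != c & b != c].
Proof. by rewrite /= !inE negb_or andbT andbA. Qed.

Lemma disjoint_setD (X : finType) (A B C : {set X}) : A \subset B -> [disjoint A & C :\: B].
Proof. by move=> AB; rewrite disjoints_subset setCD subsetU // AB orbT. Qed.

(** * The tree order *)

Section TreeOrder.
Variables (T : finType) (r : T) (par : T -> T).
Hypotheses (par_root : par r = r) (reach_root : forall x, fconnect par x r).

Local Notation tle := (tle par).

Lemma tleP x y : reflect (exists n, iter n par y = x) (tle x y).
Proof.
apply: (iffP idP) => [h|[n <-]]; last exact: fconnect_iter.
by exists (findex par y x); apply: iter_findex.
Qed.

Lemma tle_refl x : tle x x.
Proof. exact: connect0. Qed.

Lemma tle_par x : tle (par x) x.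
Proof. exact: fconnect1. Qed.

Lemma tle_trans x y z : tle x y -> tle y z -> tle x z.
Proof. by move=> xy yz; apply: connect_trans yz xy. Qed.

Lemma tle_root_eq x : tle x r -> x = r.
Proof. by move=> /tleP[n <-]; rewrite iter_fix. Qed.

Lemma par_fix_eq x : par x = x -> x = r.
Proof. by move=> px; have /tleP[n] := reach_root x; rewrite iter_fix. Qed.

(* A cycle of par through x would have to pass through the fixed point r. *)
Lemma tle_anti x y : tle x y -> tle y x -> x = y.
Proof.
move=> /tleP[i xE] /tleP[j yE].
have [n rE] := tleP _ _ (reach_root x).
have period m : iter ((i + j) * m) par x = x.
  by elim: m => [|m IHm]; rewrite ?muln0 // mulnS iterD IHm iterD yE.
have [ij0|ij_gt0] := posnP (i + j).
  by move: xE; rewrite (_ : i = 0) //; case: (i) ij0.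
have xr : x = r.
  rewrite -(period n) -(subnK (leq_pmull n ij_gt0)) iterD rE iter_fix //.
by rewrite -yE xr iter_fix.
Qed.

Lemma tle_total x y z : tle x z -> tle y z -> tle x y || tle y x.
Proof.
move=> /tleP[i <-] /tleP[j <-]; have [ij|ji] := leqP i j.
  by apply/orP; right; apply/tleP; exists (j - i); rewrite -iterD subnK.
by apply/orP; left; apply/tleP; exists (i - j); rewrite -iterD subnK // ltnW.
Qed.

Lemma tle_par_r x y : tle x y -> y != x -> tle x (par y).
Proof.
move=> /tleP[[|n] yE] yx; first by rewrite -yE eqxx in yx.
by apply/tleP; exists n; rewrite -iterSr.
Qed.

Lemma tle_neq_root x y : tle x y -> y != x -> y != r.
Proof. by move=> xy; apply: contra_neq => yr; rewrite yr in xy *; rewrite (tle_root_eq xy). Qed.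

Lemma par_2cycle x y : x != r -> par x = y -> par y = x -> False.
Proof.
move=> xr pxy pyx.
have yx : y = x by apply: tle_anti; [rewrite -pxy | rewrite -pyx]; exact: tle_par.
by move: pxy; rewrite yx => /par_fix_eq /eqP; rewrite (negbTE xr).
Qed.

End TreeOrder.

(** * Fundamental cycles of a normal spanning tree *)

Section FundamentalCycles.
Variables (T : finType) (e : rel T) (r : T) (par : T -> T).
Hypotheses (e_irr : irreflexive e) (par_root : par r = r)
  (reach_root : forall x, fconnect par x r).

Local Notation tle := (tle par).
Local Notation back := (back_edges e r par).
Local Notation cyc := (cyc_edges par).
Local Notation tp p := (tpath par p.1 p.2).
Local Notation tedge u := [set u; par u].
Local Notation bedge p := [set p.1; p.2].

Lemma back_edgeP p : p \in back ->
  [/\ e p.1 p.2, tle p.1 p.2, ~~ tree_edge r par p.1 p.2 & p.1 != p.2].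
Proof.
rewrite inE => /and3P[ep lp ntp]; split => //.
by apply: contraTneq ep => ->; rewrite e_irr.
Qed.

Lemma tpath_neq_root p u : u \in tp p -> u != r.
Proof. by rewrite inE => /and3P[pu up _]; apply: (tle_neq_root par_root pu up). Qed.

Lemma mem_tpath_top p : p \in back -> p.2 \in tp p.
Proof. by case/back_edgeP => _ lp _ np; rewrite inE lp tle_refl eq_sym np. Qed.

Lemma tree_edgeC x y : tree_edge r par x y = tree_edge r par y x.
Proof. by rewrite /tree_edge orbC. Qed.

Lemma tree_edge_par u : u != r -> tree_edge r par u (par u).
Proof. by move=> ur; rewrite /tree_edge ur eqxx. Qed.

Lemma tree_edge_set_inj u v : u != r -> v != r -> tedge u = tedge v -> u = v.
Proof.
move=> ur vr /set2_eq[[]//|[uE vE]].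
by case: (par_2cycle par_root reach_root ur vE (esym uE)).
Qed.

Lemma back_neq_tree_edge p u : p \in back -> u != r -> bedge p != tedge u.
Proof.
case/back_edgeP => _ _ ntp _ ur; apply/eqP => /set2_eq[[E1 E2]|[E1 E2]]; move: ntp.
  by rewrite E1 E2 tree_edge_par.
by rewrite E1 E2 tree_edgeC tree_edge_par.
Qed.

Lemma back_edge_set_inj p q : p \in back -> q \in back ->
  bedge q = bedge p -> q = p.
Proof.
case/back_edgeP => _ lp _ np /back_edgeP[_ lq _ _] /set2_eq[[E1 E2]|[E1 E2]].
  exact: injective_projections.
by rewrite E1 E2 in lq; rewrite (tle_anti par_root reach_root lp lq) eqxx in np.
Qed.

Lemma cyc_edgesP p F : F \in cyc p ->
  (exists2 u, u \in tp p & F = tedge u) \/ F = bedge p.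
Proof. by rewrite in_setU in_set1 => /orP[/imsetP[u up ->]|/eqP ->]; [left; exists u|right]. Qed.

Lemma mem_cyc_tree_edge p u : p \in back -> u != r ->
  (tedge u \in cyc p) = (u \in tp p).
Proof.
move=> pb ur; rewrite in_setU in_set1 eq_sym (negbTE (back_neq_tree_edge pb ur)) orbF.
apply/imsetP/idP => [[v vp /tree_edge_set_inj uv]|up]; last by exists u.
by rewrite uv // (tpath_neq_root vp).
Qed.

Lemma mem_cyc_back_edge p q : p \in back -> q \in back ->
  (bedge q \in cyc p) = (q == p).
Proof.
move=> pb qb; rewrite in_setU in_set1.
have [->|qp] := eqVneq q p; first by rewrite eqxx orbT.
apply/negbTE; rewrite negb_or; apply/andP; split.
  apply/imsetP => -[u up qE].
  by move: (back_neq_tree_edge qb (tpath_neq_root up)); rewrite qE eqxx.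
by apply: contra_neq qp; apply: back_edge_set_inj.
Qed.

Lemma card_cyc_gt1 p : p \in back -> 1 < #|cyc p|.
Proof.
move=> pb; have topr := tpath_neq_root (mem_tpath_top pb).
apply/card_gt1P; exists (tedge p.2), (bedge p); split.
- by rewrite mem_cyc_tree_edge // mem_tpath_top.
- by rewrite in_setU in_set1 eqxx orbT.
- by rewrite eq_sym back_neq_tree_edge.
Qed.

Lemma tpath_inj p q : p \in back -> q \in back -> tp p = tp q -> p = q.
Proof.
move=> pb qb tpE.
have /back_edgeP[_ lp _ np] := pb; have /back_edgeP[_ lq _ nq] := qb.
have E2 : p.2 = q.2.
  have := mem_tpath_top pb; rewrite tpE inE => /and3P[_ _ pq].
  have := mem_tpath_top qb; rewrite -tpE inE => /and3P[_ _ qp].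
  exact: (tle_anti par_root reach_root pq qp).
have E1 : p.1 = q.1.
  rewrite -E2 in lq; apply: contraTeq isT => pq.
  case/orP: (tle_total lp lq) => [pq'|qp'].
    have : q.1 \in tp p by rewrite inE pq' eq_sym pq lq.
    by rewrite tpE inE eqxx andbF.
  have : p.1 \in tp q by rewrite inE qp' pq -E2 lp.
  by rewrite -tpE inE eqxx andbF.
exact: injective_projections.
Qed.

Lemma edge_keys_uniq (us : seq T) (qs : seq (T * T)) :
  uniq us -> all (fun u => u != r) us -> uniq qs -> all (mem back) qs ->
  uniq ([seq tedge u | u <- us] ++ [seq bedge q | q <- qs]).
Proof.
move=> uu /allP ur uq /allP qb; rewrite cat_uniq; apply/and3P; split.
- by rewrite map_inj_in_uniq // => u v /ur ? /ur ?; apply: tree_edge_set_inj.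
- apply/hasP => -[_ /mapP[q qq ->] /mapP[u uus] /eqP].
  by rewrite (negbTE (back_neq_tree_edge (qb _ qq) (ur _ uus))).
- by rewrite map_inj_in_uniq // => p q /qb pb /qb qb' E; exact: back_edge_set_inj qb' pb E.
Qed.

Lemma tree_edges_in p (U : {set {set T}}) u : p \in back -> bedge p \notin U ->
  #|cyc p :\: U| <= 1 -> u \in tp p -> tedge u \in U.
Proof.
move=> pb pU card_le1 up; apply: contraTT card_le1 => uU; rewrite -ltnNge.
apply/card_gt1P; exists (tedge u), (bedge p); split.
- by rewrite in_setD uU mem_cyc_tree_edge // (tpath_neq_root up).
- by rewrite in_setD pU in_setU in_set1 eqxx orbT.
- by rewrite eq_sym (back_neq_tree_edge pb (tpath_neq_root up)).
Qed.

Lemma tpath_covered p q q' u : p \in back -> q \in back -> q' \in back ->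
  p != q -> p != q' -> #|cyc p :\: (cyc q :|: cyc q')| <= 1 ->
  u \in tp p -> (u \in tp q) || (u \in tp q').
Proof.
move=> pb qb qb' pq pq' card_le1 up.
have : tedge u \in cyc q :|: cyc q'.
  by apply: tree_edges_in card_le1 up; rewrite // in_setU !mem_cyc_back_edge // negb_or pq pq'.
by rewrite in_setU !mem_cyc_tree_edge // (tpath_neq_root up).
Qed.

Lemma tpath_bottom p : p \in back -> exists2 u, u \in tp p & par u = p.1.
Proof.
case/back_edgeP => _ /tleP[n nE] _ np.
have ex : exists n, iter n par p.2 == p.1 by exists n; rewrite nE.
case: (ex_minnP ex) => -[|m] /eqP mE m_min; first by rewrite -mE eqxx in np.
exists (iter m par p.2) => //.
have ne : iter m par p.2 != p.1 by apply/negP => /m_min; rewrite ltnn.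
by rewrite inE ne -{1}mE tle_par /tle fconnect_iter.
Qed.

Lemma tpath_par_ge p u : u \in tp p -> tle p.1 (par u).
Proof. by rewrite inE => /and3P[pu up _]; apply: tle_par_r. Qed.

Lemma tpath_up p u w : u \in tp p -> tle u w -> tle w p.2 -> w \in tp p.
Proof.
rewrite !inE => /and3P[pu up _] uw wp; rewrite (tle_trans pu uw) wp andbT /=.
by apply: contra_neq up => wE; rewrite wE in uw; apply: (tle_anti par_root reach_root uw pu).
Qed.

(* What remains of a triple of cycles none of which has two edges outside the other two. *)
Definition tight (P : seq (T * T)) :=
  forall p u, p \in P -> u \in tp p -> has (fun q => (q != p) && (u \in tp q)) P.

Lemma tight_eq P P' : P =i P' -> tight P -> tight P'.
Proof. by move=> PP' tP p u; rewrite -!(eq_has_r PP') -PP'; apply: tP. Qed.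

Lemma tight3P a b c : tight [:: a; b; c] -> [/\
  forall u, u \in tp a -> (u \in tp b) || (u \in tp c),
  forall u, u \in tp b -> (u \in tp a) || (u \in tp c) &
  forall u, u \in tp c -> (u \in tp a) || (u \in tp b)].
Proof.
have cover p q q' u : has (fun x => (x != p) && (u \in tp x)) [:: p; q; q'] ->
    (u \in tp q) || (u \in tp q').
  by rewrite /= eqxx /= orbF => /orP[] /andP[_ ->]; rewrite ?orbT.
have Eb : [:: a; b; c] =i [:: b; a; c] by move=> x; rewrite !inE orbCA.
have Ec : [:: a; b; c] =i [:: c; a; b].
  by move=> x; rewrite !inE; case: (x == a); case: (x == b); case: (x == c).
move=> tP; split=> u up; apply: cover.
- exact: tP _ _ (mem_head _ _) up.
- exact: tight_eq Eb tP _ _ (mem_head _ _) up.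
- exact: tight_eq Ec tP _ _ (mem_head _ _) up.
Qed.

Definition interlaced (a b c : T * T) :=
  [/\ a.1 = b.1, b.2 = c.2, tle b.1 c.1, tle c.1 a.2 & tle a.2 b.2].

Lemma interlaced_of_tight a b c : a \in back -> c \in back -> uniq [:: a; b; c] ->
  tight [:: a; b; c] -> a.1 = b.1 -> b.2 = c.2 -> interlaced a b c.
Proof.
move=> ab cb; rewrite uniq3 => /and3P[_ _ bc] /tight3P[Ia Ib Ic] E1 E2.
have cE : c.1 != b.1 by apply: contra_neq bc => E; apply: injective_projections (esym E) E2.
have ab2 : tle a.2 b.2.
  by case/orP: (Ia _ (mem_tpath_top ab)); rewrite !inE => /and3P[_ _]; rewrite ?E2.
have bc1 : tle b.1 c.1.
  have [u uc <-] := tpath_bottom cb.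
  by case/orP: (Ic _ uc) => /tpath_par_ge; rewrite ?E1.
split => //.
have cb1 : c.1 \in tp b by rewrite inE bc1 cE E2; case/back_edgeP: cb.
by case/orP: (Ib _ cb1); rewrite inE => /and3P[] // _; rewrite eqxx.
Qed.

(* Among the lower ends, and among the upper ends, of the three back edges two coincide;
   the cycle involved in both coincidences is the middle one. *)
Lemma tight_interlaced a b c : a \in back -> b \in back -> c \in back ->
  uniq [:: a; b; c] -> tight [:: a; b; c] ->
  exists x y z, perm_eq [:: x; y; z] [:: a; b; c] /\ interlaced x y z.
Proof.
move=> ab bb cb abc tabc.
suff perm_case x y z : perm_eq [:: x; y; z] [:: a; b; c] -> x.1 = y.1 -> y.2 = z.2 ->
    exists x y z, perm_eq [:: x; y; z] [:: a; b; c] /\ interlaced x y z.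
  have [Ia Ib Ic] := tight3P tabc.
  have top p q q' : p \in back -> (forall u, u \in tp p -> (u \in tp q) || (u \in tp q')) ->
      tle p.2 q.2 || tle p.2 q'.2.
    move=> pb I; case/orP: (I _ (mem_tpath_top pb));
    by rewrite !inE => /and3P[_ _ ->]; rewrite ?orbT.
  have bot p q q' : p \in back -> (forall u, u \in tp p -> (u \in tp q) || (u \in tp q')) ->
      tle q.1 p.1 || tle q'.1 p.1.
    move=> pb I; have [u up <-] := tpath_bottom pb.
    by case/orP: (I _ up) => /tpath_par_ge ->; rewrite ?orbT.
  have anti : antisymmetric tle by move=> x y /andP[]; apply: (tle_anti par_root reach_root).
  have anti' : antisymmetric (fun x y => tle y x).
    by move=> x y /andP[yx xy]; apply: (tle_anti par_root reach_root xy yx).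
  have tr : transitive tle by move=> y x z; apply: tle_trans.
  have tr' : transitive (fun x y => tle y x) by move=> y x z xy yz; apply: tle_trans yz xy.
  move: abc; rewrite uniq3 => /and3P[/eqP nab /eqP nac /eqP nbc].
  case: (le3_eq anti' tr' (bot _ _ _ ab Ia) (bot _ _ _ bb Ib) (bot _ _ _ cb Ic)) => E1;
  case: (le3_eq anti tr (top _ _ _ ab Ia) (top _ _ _ bb Ib) (top _ _ _ cb Ic)) => E2.
  - by case: nab; apply: injective_projections.
  - by apply: (perm_case b a c) => //; rewrite (perm_catCA [:: b] [:: a]).
  - exact: (perm_case a b c).
  - by apply: (perm_case c a b) => //; rewrite -[[:: c; a; b]]/(rot 2 [:: a; b; c]) perm_rot.
  - by case: nac; apply: injective_projections.
  - by apply: (perm_case a c b) => //; rewrite perm_cons (perm_catC [:: c] [:: b]).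
  - by apply: (perm_case c b a) => //; rewrite perm_sym -(perm_rev [:: a; b; c]).
  - by apply: (perm_case b c a) => //; rewrite -[[:: b; c; a]]/(rot 1 [:: a; b; c]) perm_rot.
  - by case: nbc; apply: injective_projections.
move=> xyz E1 E2; exists x, y, z; split => //.
have inb v : v \in [:: x; y; z] -> v \in back.
  by rewrite (perm_mem xyz) !in_cons in_nil orbF => /or3P[] /eqP->.
apply: interlaced_of_tight E1 E2.
- by apply: inb; rewrite mem_head.
- by apply: inb; rewrite !inE eqxx !orbT.
- by rewrite (perm_uniq xyz).
- by apply: tight_eq tabc; apply: perm_mem; rewrite perm_sym.
Qed.

Lemma edge_relC (F : {set {set T}}) : symmetric (edge_rel F).
Proof. by move=> x y; rewrite /edge_rel setUC. Qed.

Lemma edge_connectedU (F1 F2 : {set {set T}}) v : edge_connected F1 -> edge_connected F2 ->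
  v \in vertices F1 -> v \in vertices F2 -> edge_connected (F1 :|: F2).
Proof.
move=> c1 c2 v1 v2.
have sub (F : {set {set T}}) : F \subset F1 :|: F2 ->
    forall x y, connect (edge_rel F) x y -> connect (edge_rel (F1 :|: F2)) x y.
  by move=> /subsetP sF x y; apply: connect_sub => a b ab; apply/connect1/sF.
have to_v x : x \in vertices (F1 :|: F2) -> connect (edge_rel (F1 :|: F2)) x v.
  rewrite /vertices bigcup_setU in_setU => /orP[x1|x2].
    by apply: (sub _ (subsetUl _ _)); apply: c1.
  by apply: (sub _ (subsetUr _ _)); apply: c2.
move=> x y xF yF; apply: connect_trans (to_v x xF) _.
by rewrite (sym_connect_sym (@edge_relC _)) to_v.
Qed.

Lemma tree_edge_in_subtree (S : {set T * T}) p u : p \in S -> p \in back -> u \in tp p ->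
  tedge u \in sum_edges par S :&: tree_edges r par.
Proof.
move=> pS pb up; have ur := tpath_neq_root up; rewrite in_setI; apply/andP; split.
  by apply/bigcupP; exists p; rewrite // mem_cyc_tree_edge.
by apply/imsetP; exists u; rewrite // inE.
Qed.

Lemma meets_in_subtree1 p : p \in back -> meets_in_subtree r par [set p].
Proof.
move=> pb; rewrite /meets_in_subtree; set F := _ :&: _.
have Fu u : u \in tp p -> tedge u \in F.
  by move=> up; apply: tree_edge_in_subtree up; rewrite ?set11.
have to_top u : u \in tp p -> connect (edge_rel F) u p.2.
  move=> up; have /tleP[n un] : tle u p.2 by move: up; rewrite inE => /and3P[].
  elim: n u un up => [|n IHn] u <- up; first exact: connect0.
  have wp : iter n par p.2 \in tp p by apply: tpath_up up (tle_par _ _) (fconnect_iter _ _ _).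
  apply: connect_trans (IHn _ erefl wp).
  by apply: connect1; rewrite /edge_rel setUC; apply: Fu.
have to_top' x : x \in vertices F -> connect (edge_rel F) x p.2.
  case/bigcupP => E /setIP[]; rewrite /sum_edges big_set1 => /cyc_edgesP[[u up ->]|->] ET.
    case/set2P => ->; first exact: to_top.
    by apply: connect_trans (to_top u up); apply: connect1; rewrite /edge_rel setUC Fu.
  case/imsetP: ET => u; rewrite inE => ur /eqP.
  by rewrite (negbTE (back_neq_tree_edge pb ur)).
move=> x y xF yF; apply: connect_trans (to_top' x xF) _.
by rewrite (sym_connect_sym (@edge_relC _)) to_top'.
Qed.

Lemma fundamental_set_exists p : p \in back -> exists2 S, fundamental_set e r par S & p \in S.
Proof.
move=> pb; pose ok (S : {set T * T}) := (S \subset back) && `[< meets_in_subtree r par S >].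
have ok1 : ok [set p] by rewrite /ok sub1set pb; apply/asboolP/meets_in_subtree1.
have [S /maxsetP[/andP[Sb /asboolP mS] Smax] pS] := maxset_exists ok1.
exists S; last by rewrite -sub1set.
by split => // S' SS' S'b mS'; apply: Smax SS'; rewrite /ok S'b; apply/asboolP.
Qed.

Lemma cyc_edges_meet p q F : p \in back -> q \in back -> F \in cyc p -> F \in cyc q ->
  exists2 u, u \in tp p & u \in tp q.
Proof.
move=> pb qb /cyc_edgesP[[u up ->]|->].
  by rewrite mem_cyc_tree_edge ?(tpath_neq_root up) // => uq; exists u.
by rewrite mem_cyc_back_edge // => /eqP <-; exists p.2; exact: mem_tpath_top.
Qed.

(* Two fundamental sets sharing an edge are equal: by maximality each equals their union. *)
Lemma fundamental_set_eq (S1 S2 : {set T * T}) p F :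
  fundamental_set e r par S1 -> fundamental_set e r par S2 ->
  p \in S1 -> F \in cyc p -> F \in sum_edges par S2 -> S1 = S2.
Proof.
move=> [S1b m1 max1] [S2b m2 max2] pS1 Fp /bigcupP[q qS2 Fq].
have pb := subsetP S1b _ pS1; have qb := subsetP S2b _ qS2.
have [u up uq] := cyc_edges_meet pb qb Fp Fq.
have mU : meets_in_subtree r par (S1 :|: S2).
  rewrite /meets_in_subtree /sum_edges bigcup_setU setIUl.
  by apply: (edge_connectedU (v := u)) => //; apply/bigcupP;
    [exists (tedge u); first exact: tree_edge_in_subtree pS1 pb up
    |exists (tedge u); first exact: tree_edge_in_subtree qS2 qb uq]; rewrite !inE eqxx.
have S12b : S1 :|: S2 \subset back by rewrite subUset S1b S2b.
by rewrite -(max1 _ (subsetUl S1 S2) S12b mU) (max2 _ (subsetUr S1 S2) S12b mU).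
Qed.

(* [forward x y]: the edge {x, y} is oriented from x to y in the suitably oriented graph. *)
Definition forward x y :=
  if tree_edge r par x y then (y != r) && (par y == x) else tle y x.

Lemma forwardC x y : normal_tree e par -> e x y -> forward y x = ~~ forward x y.
Proof.
move=> normal exy; rewrite /forward tree_edgeC.
have no2 u v : u != r -> par u = v -> (v != r) && (par v == u) = false.
  move=> ur puv; apply/negP => /andP[_ /eqP pvu].
  exact: (par_2cycle par_root reach_root ur puv pvu).
case: ifP => [/orP[]/andP[ur /eqP pu]|_].
- by rewrite (no2 _ _ ur pu) ur pu eqxx.
- by rewrite (no2 _ _ ur pu) ur pu eqxx.
have not_both : ~~ (tle x y && tle y x).
  apply/andP => -[xy yx]; move: exy.
  by rewrite (tle_anti par_root reach_root xy yx) e_irr.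
by move: (normal _ _ exy) not_both; case: (tle x y); case: (tle y x).
Qed.

(** * Fitting prescribed cycle gains *)

Local Open Scope ring_scope.
Variables (R : realType) (theta : T * T -> R).
Implicit Types (ang : {set T} -> R) (D : {set {set T}}) (P : seq (T * T)).

Definition admissible ang := forall F, halfpi (ang F).

Definition cycle_angle ang p := \sum_(F in cyc p) ang F.

Definition fits ang p := cexpi (cycle_angle ang p) = cexpi (theta p).

Definition cycles_edges P := \bigcup_(p in P) cyc p.

Definition realizes D P ang ang' :=
  [/\ admissible ang', forall F, F \notin D -> ang' F = ang F & forall p, p \in P -> fits ang' p].

Lemma realizes_adm D P ang ang' : realizes D P ang ang' -> admissible ang'.
Proof. by case. Qed.

Lemma fits_eq ang ang' p : (forall F, F \in cyc p -> ang' F = ang F) ->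
  fits ang p -> fits ang' p.
Proof. by move=> E; rewrite /fits /cycle_angle (eq_bigr _ E). Qed.

Lemma realizes_sub D D' P P' ang ang' : realizes D P ang ang' ->
  D \subset D' -> {subset P' <= P} -> realizes D' P' ang ang'.
Proof.
move=> [adm same fit] /subsetP DD' P'P; split => // [F FD'|p /P'P]; last exact: fit.
by apply: same; apply: contra FD'; apply: DD'.
Qed.

Lemma realizes_cat D1 D2 P1 P2 ang1 ang2 ang3 :
  realizes D1 P1 ang1 ang2 -> realizes D2 P2 ang2 ang3 ->
  (forall p, p \in P1 -> [disjoint cyc p & D2]) ->
  realizes (D1 :|: D2) (P1 ++ P2) ang1 ang3.
Proof.
move=> [_ same1 fit1] [adm3 same2 fit2] disj; split => // [F|p].
  by rewrite in_setU negb_or => /andP[FD1 FD2]; rewrite same2 // same1.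
rewrite mem_cat => /orP[pP1|]; last exact: fit2.
apply: fits_eq (fit1 _ pP1) => F Fp; apply: same2.
by rewrite (disjointFr (disj _ pP1) Fp).
Qed.

Lemma cycles_edges_eq P P' : P =i P' -> cycles_edges P = cycles_edges P'.
Proof. by move=> PP'; apply: eq_bigl. Qed.

Lemma realizes_eq P P' ang ang' : P =i P' ->
  realizes (cycles_edges P) P ang ang' -> realizes (cycles_edges P') P' ang ang'.
Proof.
by move=> PP' rP; apply: realizes_sub rP _ _; rewrite ?(cycles_edges_eq PP') // => p; rewrite PP'.
Qed.

Lemma fits_reassign ang l p :
  cexpi (\sum_(kv <- l | kv.1 \in cyc p) kv.2) =
  cexpi (theta p - cycle_angle ang p + \sum_(kv <- l | kv.1 \in cyc p) ang kv.1) ->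
  fits (reassign ang l) p.
Proof.
move=> E; rewrite /fits /cycle_angle reassign_sum sumrB.
rewrite (addrC (\sum_(kv <- l | _) kv.2)) addrA cexpiD E -cexpiD.
by congr cexpi; rewrite /cycle_angle; ring.
Qed.

Lemma realizes_reassign D P ang l : {subset map fst l <= D} ->
  all (fun kv => halfpi kv.2) l -> uniq (map fst l) -> admissible ang ->
  (forall p, p \in P -> fits (reassign ang l) p) -> realizes D P ang (reassign ang l).
Proof.
move=> lD /allP lhalf ul adm fit; split => // [F|F FD]; last first.
  by apply: reassign_out; apply: contra FD; apply: lD.
have [/mapP[[F' v] Fl /= ->]|Fl] := boolP (F \in map fst l); last by rewrite reassign_out.
by rewrite (reassign_in _ ul Fl); apply: (lhalf _ Fl).
Qed.

(* Two free edges suffice: their angles in [-pi/2, pi/2] can add up to any angle mod 2pi. *)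
Lemma realize_two_free ang (B : {set {set T}}) p : (1 < #|cyc p :\: B|)%N -> admissible ang ->
  exists ang', realizes (cyc p :\: B) [:: p] ang ang'.
Proof.
move=> /card_gt1P[F1 [F2 [F1p F2p F12]]] adm.
have [x [y [hx hy xy]]] :=
  cexpi_halfpi2 (theta p - (cycle_angle ang p - ang F1 - ang F2)).
exists (reassign ang [:: (F1, x); (F2, y)]); apply: realizes_reassign => //.
- by move=> F; rewrite /= !in_cons in_nil orbF => /orP[] /eqP ->.
- by rewrite /= hx hy.
- by rewrite /= inE F12.
move=> q; rewrite inE => /eqP ->; apply: fits_reassign.
rewrite !big_cons !big_nil /=; move: F1p F2p; rewrite !in_setD => /andP[_ ->] /andP[_ ->].
by rewrite addr0 xy; congr cexpi; ring.
Qed.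

Lemma realize_dep ang (B : {set {set T}}) ks : dep_from par B ks -> admissible ang ->
  exists ang', realizes (cycles_edges ks :\: B) ks ang ang'.
Proof.
elim: ks B ang => [|k ks IHks] B ang /=.
  by move=> _ adm; exists ang; split.
move=> /andP[free dep] adm.
have [ang1 r1] := realize_two_free free adm.
have [ang2 r2] := IHks _ _ dep (realizes_adm r1).
exists ang2; apply: (realizes_sub (realizes_cat r1 r2 _)) => //.
- by move=> q; rewrite inE => /eqP ->; apply: disjoint_setD; apply: subsetUr.
apply/subsetP => F; rewrite in_setU !in_setD => /orP[/andP[FB Fk]|/andP[]].
  by rewrite FB; apply/bigcupP; exists k; rewrite ?mem_head.
rewrite in_setU negb_or => /andP[-> _] /bigcupP[j jks Fj].
by apply/bigcupP; exists j; rewrite // in_cons jks orbT.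
Qed.

Lemma mem_cycles_edges F P : (F \in cycles_edges P) = has (fun p => F \in cyc p) P.
Proof. by apply/bigcupP/hasP => -[p pP Fp]; exists p. Qed.

Lemma cycles_edges_subset P P' : {subset P <= P'} -> cycles_edges P \subset cycles_edges P'.
Proof.
move=> PP'; apply/subsetP => F; rewrite !mem_cycles_edges => /hasP[p /PP' pP' Fp].
by apply/hasP; exists p.
Qed.

Lemma realize_pair ang p q : p \in back -> q \in back -> p != q -> admissible ang ->
  exists ang', realizes (cycles_edges [:: p; q]) [:: p; q] ang ang'.
Proof.
have ordered p' q' : p' \in back -> (1 < #|cyc q' :\: cyc p'|)%N -> admissible ang ->
    exists ang', realizes (cycles_edges [:: p'; q']) [:: p'; q'] ang ang'.
  move=> pb free adm.
  have dep : dep_from par set0 [:: p'; q'] by rewrite /= setD0 card_cyc_gt1 // set0U free.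
  by have [ang' rp] := realize_dep dep adm; exists ang'; rewrite setD0 in rp.
move=> pb qb pq adm.
have [free|] := boolP (1 < #|cyc q :\: cyc p|)%N; first exact: ordered.
have [free _|] := boolP (1 < #|cyc p :\: cyc q|)%N.
  have [ang' rqp] := ordered q p qb free adm; exists ang'.
  by apply: realizes_eq rqp => x; rewrite !inE orbC.
rewrite -!leqNgt => p_le1 q_le1.
suff pq_eq : p = q by rewrite pq_eq eqxx in pq.
have sub p' q' : p' \in back -> q' \in back -> p' != q' ->
    (#|cyc p' :\: cyc q'| <= 1)%N -> {subset tp p' <= tp q'}.
  move=> p'b q'b pq' le1 u up.
  have := tree_edges_in p'b _ le1 up; rewrite mem_cyc_tree_edge ?(tpath_neq_root up) //.
  by apply; rewrite mem_cyc_back_edge.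
by apply: tpath_inj => //; apply/setP => u; apply/idP/idP; apply: sub; rewrite // eq_sym.
Qed.

Lemma realize_triple_free ang a b c : a \in back -> b \in back -> a != b ->
  (1 < #|cyc c :\: (cyc a :|: cyc b)|)%N -> admissible ang ->
  exists ang', realizes (cycles_edges [:: a; b; c]) [:: a; b; c] ang ang'.
Proof.
move=> ab bb nab free adm.
have [ang1 r1] := realize_pair ab bb nab adm.
have [ang2 r2] := realize_two_free free (realizes_adm r1).
exists ang2; apply: realizes_sub (realizes_cat r1 r2 _) _ _ => //.
  by move=> p; rewrite !inE => /orP[] /eqP ->; apply: disjoint_setD; rewrite ?subsetUl ?subsetUr.
rewrite subUset cycles_edges_subset => [|p]; last by rewrite !inE => /orP[] ->; rewrite ?orbT.
apply: subset_trans (subsetDl _ _) _; apply/subsetP => F Fc.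
by rewrite mem_cycles_edges /= Fc !orbT.
Qed.

Lemma realize_triple_pattern (k : bool) ang a b c u1 u2 u3 :
  a \in back -> b \in back -> c \in back -> u1 != u2 ->
  [/\ u1 \in tp a, u2 \in tp a & u3 \notin tp a] ->
  [/\ u1 \in tp b, u2 \in tp b & u3 \in tp b] ->
  [/\ u1 \notin tp c, (u2 \in tp c) = k & u3 \in tp c] -> admissible ang ->
  exists ang', realizes (cycles_edges [:: a; b; c]) [:: a; b; c] ang ang'.
Proof.
move=> ab bb cb u12 [u1a u2a u3a] [u1b u2b u3b] [u1c u2c u3c] adm.
have u1r := tpath_neq_root u1b; have u2r := tpath_neq_root u2b.
have u3r := tpath_neq_root u3b.
have nab : a != b by apply: contraNneq u3a => ->.
have nac : a != c by apply: contraNneq u3a => ->.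
have nbc : b != c by apply: contraTneq u1b => ->.
have [ba ca cb'] : [/\ (b == a) = false, (c == a) = false & (c == b) = false].
  by split; apply/negbTE; rewrite eq_sym.
have [al [be [ga [p1 [p2 [p3 [[hal hbe hga] [hp1 hp2 hp3] eA eC eB]]]]]]] :=
  halfpi_triple_system k
    (theta a - cycle_angle ang a + (ang (tedge u1) + ang (tedge u2) + ang (bedge a)))
    (theta b - cycle_angle ang b +
       (ang (tedge u1) + ang (tedge u2) + ang (tedge u3) + ang (bedge b)))
    (theta c - cycle_angle ang c + (ang (tedge u2) *+ k + ang (tedge u3) + ang (bedge c))).
exists (reassign ang [:: (tedge u1, al); (tedge u2, be); (tedge u3, ga);
                       (bedge a, p1); (bedge b, p3); (bedge c, p2)]).
apply: realizes_reassign.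
- apply/allP; rewrite /= !mem_cycles_edges /= !mem_cyc_tree_edge // !mem_cyc_back_edge //.
  by rewrite u1b u2b u3b !eqxx !orbT.
- by rewrite /= hal hbe hga hp1 hp2 hp3.
- rewrite -[map fst _]/([seq tedge u | u <- [:: u1; u2; u3]] ++ [seq bedge q | q <- [:: a; b; c]]).
  apply: edge_keys_uniq; last by rewrite /= ab bb cb.
  + rewrite uniq3 u12 /=.
    by apply/andP; split; [apply: contraNneq u1c => -> | apply: contraNneq u3a => <-].
  + by rewrite /= u1r u2r u3r.
  + by rewrite uniq3 nab nac nbc.
- exact: adm.
move=> p; rewrite !in_cons in_nil orbF => /or3P[] /eqP ->; apply: fits_reassign;
  rewrite !big_cons !big_nil /= !mem_cyc_tree_edge // !mem_cyc_back_edge // !eqxx.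
- by rewrite u1a u2a (negbTE u3a) ba ca; apply: (cexpi_congr _ _ eA); ring.
- by rewrite u1b u2b u3b (negbTE nab) cb'; apply: (cexpi_congr _ _ eB); ring.
- rewrite (negbTE u1c) u2c u3c (negbTE nac) (negbTE nbc).
  by case: (k) eC {u2c} => /= eC; apply: (cexpi_congr _ _ eC); ring.
Qed.

Lemma realize_interlaced ang a b c : a \in back -> b \in back -> c \in back ->
  uniq [:: a; b; c] -> interlaced a b c -> admissible ang ->
  exists ang', realizes (cycles_edges [:: a; b; c]) [:: a; b; c] ang ang'.
Proof.
move=> ab bb cb; rewrite uniq3 => /and3P[nab _ nbc] [E1 E2 bc1 ca2 ab2].
have /back_edgeP[_ la nta na] := ab.
have a2b2 : a.2 != b.2 by apply: contra_neq nab; apply: injective_projections.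
have c1b1 : c.1 != b.1 by apply: contra_neq nbc => E; apply: injective_projections (esym E) E2.
have a2a := mem_tpath_top ab; have b2b := mem_tpath_top bb.
have b2c : b.2 \in tp c by rewrite E2 mem_tpath_top.
have b2a : b.2 \notin tp a.
  rewrite inE; apply/and3P => -[_ _ ba2].
  by case/eqP: a2b2; apply: (tle_anti par_root reach_root).
have a2b : a.2 \in tp b by rewrite inE -E1 la eq_sym na.
have a2r := tpath_neq_root a2a.
have [c1a2|c1a2] := eqVneq c.1 a.2.
  have pa1 : par a.2 != a.1.
    by apply: contraNneq nta => pa; rewrite /tree_edge a2r pa eqxx orbT.
  have pa_ne : a.2 != par a.2.
    by apply: contra_neq a2r => E; apply: (par_fix_eq reach_root (esym E)).
  apply: (realize_triple_pattern (k := false) (u1 := a.2) (u2 := par a.2) (u3 := b.2)) => //.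
  - by split => //; rewrite inE (tpath_par_ge a2a) pa1 tle_par.
  - by split => //; rewrite inE -E1 (tpath_par_ge a2a) pa1 (tle_trans (tle_par _ _) ab2).
  split => //; first by rewrite inE c1a2 eqxx /= andbF.
  apply/negbTE; rewrite inE c1a2; apply/and3P => -[pa _ _].
  by case/eqP: pa_ne; apply: (tle_anti par_root reach_root pa (tle_par _ _)).
apply: (realize_triple_pattern (k := true) (u1 := c.1) (u2 := a.2) (u3 := b.2)) => //.
- by split => //; rewrite inE E1 bc1 c1b1 ca2.
- by split => //; rewrite inE bc1 c1b1 (tle_trans ca2 ab2).
- by split => //; rewrite inE ?eqxx ?andbF // ca2 eq_sym c1a2 -E2 ab2.
Qed.

Lemma realize_triple ang a b c : a \in back -> b \in back -> c \in back ->
  uniq [:: a; b; c] -> admissible ang ->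
  exists ang', realizes (cycles_edges [:: a; b; c]) [:: a; b; c] ang ang'.
Proof.
move=> ab bb cb abc adm; move: (abc); rewrite uniq3 => /and3P[nab nac nbc].
have reorder x y z : [:: x; y; z] =i [:: a; b; c] ->
    (exists ang', realizes (cycles_edges [:: x; y; z]) [:: x; y; z] ang ang') ->
    exists ang', realizes (cycles_edges [:: a; b; c]) [:: a; b; c] ang ang'.
  by move=> E [ang' rx]; exists ang'; apply: realizes_eq rx.
have [c_free|] := boolP (1 < #|cyc c :\: (cyc a :|: cyc b)|)%N.
  exact: realize_triple_free.
have [a_free _|] := boolP (1 < #|cyc a :\: (cyc b :|: cyc c)|)%N.
  apply: (reorder b c a); last exact: realize_triple_free.
  by move=> x; rewrite !inE; case: (x == a); case: (x == b); case: (x == c).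
have [b_free _ _|] := boolP (1 < #|cyc b :\: (cyc a :|: cyc c)|)%N.
  apply: (reorder a c b); last exact: realize_triple_free.
  by move=> x; rewrite !inE; case: (x == a); case: (x == b); case: (x == c).
rewrite -!leqNgt => b_le1 a_le1 c_le1.
have tabc : tight [:: a; b; c].
  move=> p u; rewrite !in_cons in_nil orbF => /or3P[] /eqP -> up /=; rewrite eqxx.
  - rewrite eq_sym nab eq_sym nac /= orbF; exact: tpath_covered up.
  - by rewrite nab eq_sym nbc /= orbF; apply: tpath_covered up; rewrite // eq_sym.
  - by rewrite nac nbc /= orbF; apply: tpath_covered up; rewrite // eq_sym.
have [x [y [z [xyz xyz_int]]]] := tight_interlaced ab bb cb abc tabc.
have inb v : v \in [:: x; y; z] -> v \in back.
  by rewrite (perm_mem xyz) !in_cons in_nil orbF => /or3P[] /eqP ->.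
apply: (reorder x y z (perm_mem xyz)); apply: realize_interlaced => //.
- by apply: inb; rewrite mem_head.
- by apply: inb; rewrite !in_cons eqxx orbT.
- by apply: inb; rewrite !in_cons eqxx !orbT.
- by rewrite (perm_uniq xyz).
Qed.

Lemma cycles_edges_sub_sum P (S : {set T * T}) :
  {subset P <= S} -> cycles_edges P \subset sum_edges par S.
Proof. by move=> PS; apply/bigcupsP => p /PS pS; apply: bigcup_sup. Qed.

Lemma realize_fundamental_set ang (S : {set T * T}) : fundamental_set e r par S ->
  (K4_initiated par S -> DEP_K4 par S) -> (~ K4_initiated par S -> DEP_nonK4 par S) ->
  admissible ang -> exists ang', realizes (sum_edges par S) (enum S) ang ang'.
Proof.
move=> [Sb _ _] K4_dep nonK4_dep adm; have inb := subsetP Sb.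
have [/K4_dep[p1 [p2 [p3 [ks [p123 sub _ ksE dep]]]]] | /nonK4_dep[ks [ksE dep]]] :=
  pselect (K4_initiated par S); last first.
  case: ks ksE dep => [|k ks] ksE dep.
    by exists ang; split => // p; rewrite -(perm_mem ksE).
  have kS : k \in S by rewrite -mem_enum -(perm_mem ksE) mem_head.
  have dep0 : dep_from par set0 (k :: ks) by rewrite /= setD0 card_cyc_gt1 ?inb // set0U.
  have [ang' rk] := realize_dep dep0 adm; exists ang'.
  apply: realizes_sub rk _ _ => [|p]; last by rewrite (perm_mem ksE).
  by rewrite setD0 cycles_edges_sub_sum // => p; rewrite (perm_mem ksE) mem_enum.
have P3S : {subset [:: p1; p2; p3] <= S}.
  by move=> p pP; apply: (subsetP sub); rewrite !inE -orbA; rewrite !in_cons in_nil orbF in pP.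
have ksS : {subset ks <= S} by move=> k; rewrite (perm_mem ksE) mem_enum in_setD => /andP[].
have K : cyc p1 :|: cyc p2 :|: cyc p3 = cycles_edges [:: p1; p2; p3].
  by apply/setP => F; rewrite mem_cycles_edges /= orbF orbA -!in_setU.
have [p1b p2b p3b] : [/\ p1 \in back, p2 \in back & p3 \in back].
  by split; apply/inb/P3S; rewrite !in_cons eqxx ?orbT.
have [ang1 r1] := realize_triple p1b p2b p3b p123 adm.
rewrite /= K in dep; have [ang2 r2] := realize_dep dep (realizes_adm r1).
exists ang2; apply: realizes_sub (realizes_cat r1 r2 _) _ _.
- by move=> p pP; apply: disjoint_setD; rewrite /cycles_edges; apply: bigcup_sup.
- rewrite subUset !cycles_edges_sub_sum //.
  by apply: subset_trans (subsetDl _ _) _; apply: cycles_edges_sub_sum.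
- move=> p; rewrite mem_enum mem_cat (perm_mem ksE) mem_enum in_setD => pS.
  have [|_] := boolP (p \in [set p1; p2; p3]); last by rewrite pS orbT.
  by rewrite !inE -orbA => ->.
Qed.

Lemma exists_fitting_angles : EDEP e r par ->
  exists2 ang, admissible ang & forall p, p \in back -> fits ang p.
Proof.
move=> edep; pose fund S := `[< fundamental_set e r par S >].
suff [ang adm fitF] : exists2 ang, admissible ang &
    forall S, S \in enum [pred S | fund S] -> forall p, p \in S -> fits ang p.
  exists ang => // p pb; have [S fS pS] := fundamental_set_exists pb.
  by apply: (fitF S) => //; rewrite mem_enum inE; apply/asboolP.
have : all fund (enum [pred S | fund S]) by apply/allP => S; rewrite mem_enum.
elim: (enum _) => [_|S L IHL /= /andP[/asboolP fS fL]].
  exists (fun=> 0) => // F; have := pi_gt0 R; rewrite /halfpi => pi_gt0.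
  by apply/andP; split; lra.
have [ang adm fit] := IHL fL.
have [ang' [adm' same' fit']] := realize_fundamental_set fS (edep S fS).1 (edep S fS).2 adm.
exists ang' => // S'; rewrite in_cons.
have [-> _ p pS|S'S /= S'L p pS'] := eqVneq S' S; first by apply: fit'; rewrite mem_enum.
have /asboolP fS' := allP fL _ S'L.
apply: fits_eq (fit _ S'L _ pS') => F Fp; apply: same'.
by apply: contraNN S'S => FS; apply/eqP; apply: fundamental_set_eq fS' fS pS' Fp FS.
Qed.

Lemma gain_graph_of_angles ang : normal_tree e par -> admissible ang ->
  (forall p, p \in back -> fits ang p) ->
  exists phi, in_AT e r par theta phi /\ forall x y, 0 <= 'Re (gain_adj e phi x y).
Proof.
move=> normal adm fit.
pose phi x y := if forward x y then cexpi (ang [set x; y]) else cexpi (- ang [set x; y]).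
exists phi; split; first split.
- move=> x y exy; split; first by rewrite /phi; case: ifP => _; rewrite norm_cexpi.
  by rewrite /phi forwardC // setUC; case: (forward x y); rewrite /= cexpiN ?invrK.
- move=> p pb; have /back_edgeP[_ lp ntp _] := pb; rewrite /cycle_gain.
  have -> : phi p.2 p.1 = cexpi (ang (bedge p)).
    by rewrite /phi /forward tree_edgeC (negbTE ntp) lp setUC.
  have -> : \prod_(u in tp p) phi (par u) u = \prod_(u in tp p) cexpi (ang (tedge u)).
    apply: eq_bigr => u up; have ur := tpath_neq_root up.
    by rewrite /phi /forward tree_edgeC tree_edge_par // ur eqxx /= setUC.
  rewrite -(big_morph _ (@cexpiD R) (cexpi0 R)) -cexpiD -(fit _ pb) /cycle_angle.
  rewrite /cyc_edges (setUC [set tedge u | u in tp p]) big_setU1 /=; last first.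
    by apply/imsetP => -[u up /eqP]; rewrite (negbTE (back_neq_tree_edge pb (tpath_neq_root up))).
  rewrite big_imset //= => u v up vp.
  by apply: tree_edge_set_inj; [exact: tpath_neq_root up | exact: tpath_neq_root vp].
- move=> x y; rewrite /gain_adj; case: ifP => _; last by rewrite -complexRe ler0c.
  by rewrite /phi; case: ifP => _; apply: Re_cexpi_ge0; rewrite ?adm // halfpiN.
Qed.

End FundamentalCycles.

Theorem theorem4p4 (R : realType) (T : finType) (e : rel T) (r : T) (par : T -> T) :
  simple_graph e -> connected_graph e ->
  rooted_spanning_tree e r par -> normal_tree e par ->
  EDEP e r par -> GNRP R e r par.
Proof.
move=> [_ e_irr] _ [par_root _ reach_root] normal edep theta _.
have [ang adm fit] := exists_fitting_angles e_irr par_root reach_root theta edep.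
exact: (gain_graph_of_angles e_irr par_root reach_root normal adm fit).
Qed.
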